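(* Let $\mathcal{P}_1,\dots,\mathcal{P}_k$ be finite posets with $p_j=|\mathcal{P}_j|$ and assume that $\mathcal{C}(\mathcal{P}_j)$ is simplicial for every $j=1,\dots,k$. For each $j$ let $\mathbf{A}^{(j)}\in\mathrm{GL}(p_j)$ be an invertible linear map with $\mathbf{A}^{(j)}(\mathcal{C}(\mathcal{P}_j))=\mathbb{R}^{p_j}_+$. If $\mathbf{T}\in\mathcal{N}_{<\infty}$, then $\mathrm{NDrank}(\mathbf{T})=\mathrm{rank}_+\big((\otimes_{j=1}^k\mathbf{A}^{(j)})(\mathbf{T})\big)$.
   Context: For a finite poset $\mathcal{Q}$, the order cone $\mathcal{C}(\mathcal{Q})\subset\mathbb{R}^{\mathcal{Q}}$ is the set of functions $\mathbf{f}$ on $\mathcal{Q}$ with $f_x\ge0$ for all $x$ and $f_x\le f_y$ whenever $x\preceq y$. A cone in $\mathbb{R}^p$ is simplicial if it is the conical hull of $p$ linearly independent vectors. Tensors are elements of $\mathbb{R}^{\mathcal{P}_1\times\cdots\times\mathcal{P}_k}=\otimes_j\mathbb{R}^{p_j}$, with the product poset ordered componentwise. The nondecreasing rank $\mathrm{NDrank}(\mathbf{T})$ is the minimal $r$ such that $\mathbf{T}=\sum_{i=1}^r\otimes_{j=1}^k\mathbf{v}^{(ij)}$ with all $\mathbf{v}^{(ij)}\in\mathcal{C}(\mathcal{P}_j)$ ($\infty$ if no such decomposition exists), and $\mathcal{N}_{<\infty}$ is the set of tensors of finite nondecreasing rank. $\mathrm{rank}_+(\mathbf{S})$ is the minimal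 $r$ such that $\mathbf{S}=\sum_{i=1}^r\otimes_j\mathbf{v}^{(ij)}$ with all $\mathbf{v}^{(ij)}$ entrywise nonnegative. The linear map $\otimes_j\mathbf{A}^{(j)}$ is defined in coordinates by $[(\otimes_j\mathbf{A}^{(j)})(\mathbf{T})]_{j_1\dots j_k}=\sum_{i_1,\dots,i_k}A^{(1)}_{j_1i_1}\cdots A^{(k)}_{j_ki_k}T_{i_1\dots i_k}$. *)

From HB Require Import structures.
From mathcomp Require Import all_boot all_order all_algebra.
From mathcomp Require Import boolp reals.
Set Implicit Arguments. Unset Strict Implicit. Unset Printing Implicit Defensive.
Import Order.TTheory GRing.Theory Num.Theory.
Local Open Scope ring_scope.

(* minimum of a Prop-valued predicate on nat; None stands for +infinity *)
Lemma exists_asbool (P : nat -> Prop) : (exists n, P n) -> exists n, `[< P n >].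
Proof. by case=> n hn; exists n; apply/asboolP. Qed.

Definition min_option (P : nat -> Prop) : option nat :=
  match pselect (exists n, P n) with
  | left h => Some (ex_minn (exists_asbool h))
  | right _ => None
  end.

Section Defs.
Variable R : realType.

Definition is_poset (p : nat) (le : rel 'I_p) : Prop :=
  [/\ forall x, le x x,
      forall x y, le x y -> le y x -> x = y &
      forall x y z, le x y -> le y z -> le x z].

Definition order_cone (p : nat) (le : rel 'I_p) (f : 'I_p -> R) : Prop :=
  (forall x, 0 <= f x) /\ (forall x y, le x y -> f x <= f y).

Definition simplicial (p : nat) (C : ('I_p -> R) -> Prop) : Prop :=
  exists B : 'M[R]_p, row_free B /\
    forall f, C f <-> exists c : 'I_p -> R,
      (forall i, 0 <= c i) /\ forall x, f x = \sum_(i < p) c i * B i x.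

Definition mxapp (p : nat) (A : 'M[R]_p) (f : 'I_p -> R) : 'I_p -> R :=
  fun x => \sum_(l < p) A x l * f l.

Definition maps_onto_orthant (p : nat) (A : 'M[R]_p) (C : ('I_p -> R) -> Prop)
  : Prop :=
  forall y : 'I_p -> R,
    (exists f, C f /\ y = mxapp A f) <-> (forall x, 0 <= y x).

Definition tidx (k : nat) (p : 'I_k -> nat) := {dffun forall j : 'I_k, 'I_(p j)}.

Definition tensor (k : nat) (p : 'I_k -> nat) := tidx p -> R.

Definition decomp_with (k : nat) (p : 'I_k -> nat)
    (C : forall j : 'I_k, ('I_(p j) -> R) -> Prop) (T : tensor p) (r : nat)
  : Prop :=
  exists v : 'I_r -> forall j : 'I_k, 'I_(p j) -> R,
    (forall i j, C j (v i j)) /\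
    forall I : tidx p, T I = \sum_(i < r) \prod_(j < k) v i j (I j).

Definition NDrank (k : nat) (p : 'I_k -> nat) (le : forall j, rel 'I_(p j))
  (T : tensor p) : option nat :=
  min_option (decomp_with (fun j => order_cone (le j)) T).

Definition N_fin (k : nat) (p : 'I_k -> nat) (le : forall j, rel 'I_(p j))
  (T : tensor p) : Prop :=
  exists r, decomp_with (fun j => order_cone (le j)) T r.

Definition nonneg_vec (p : nat) (f : 'I_p -> R) : Prop := forall x, 0 <= f x.

Definition rank_plus (k : nat) (p : 'I_k -> nat) (S : tensor p) : option nat :=
  min_option (decomp_with (fun j => @nonneg_vec (p j)) S).

Definition tensor_map (k : nat) (p : 'I_k -> nat)
    (A : forall j : 'I_k, 'M[R]_(p j)) (T : tensor p) : tensor p :=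
  fun J => \sum_(I : tidx p) (\prod_(j < k) A j (J j) (I j)) * T I.

End Defs.

From HB Require Import structures.
From mathcomp Require Import all_boot all_order all_algebra.
From mathcomp Require Import boolp reals.
Set Implicit Arguments. Unset Strict Implicit. Unset Printing Implicit Defensive.
Import Order.TTheory GRing.Theory Num.Theory.
Local Open Scope ring_scope.

(* Each [A j] restricts to a bijection from the cone [C(P_j)] onto the
   nonnegative orthant, and [tensor_map A] sends a sum of rank-one tensors
   [v_1 (x) ... (x) v_k] to the sum of the [A_1 v_1 (x) ... (x) A_k v_k].
   Applying [A] factorwise therefore turns nondecreasing decompositions of [T]
   into nonnegative decompositions of [tensor_map A T] with the same number of
   terms, and conversely, pulling every factor back along [A j] and using that
   [tensor_map A] is injective when every [A j] is invertible.  So both ranks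
   are minima over the same set of lengths. *)

Lemma prod_sum_tidx (R : comPzSemiRingType) (k : nat) (p : 'I_k -> nat)
    (a : forall j, 'I_(p j) -> R) :
  \prod_(j < k) \sum_(x : 'I_(p j)) a j x =
  \sum_(I : tidx p) \prod_(j < k) a j (I j).
Proof.
pose G (t : {j : 'I_k & 'I_(p j)}) := a (tag t) (tagged t).
transitivity (\prod_(j < k) \sum_(t | tagged_with (fun j => 'I_(p j)) j t) G t).
  apply: eq_bigr => j _.
  rewrite -(@big_pred1_eq R 0 +%R _ j (fun j => \sum_(x : 'I_(p j)) a j x)).
  rewrite (sig_big_dep _ (fun j (x : 'I_(p j)) => true) (fun j x => a j x)) /=.
  by apply: eq_bigl => t; rewrite andbT.
rewrite bigA_distr_big_dep big_sub.
rewrite (reindex (fun I : tidx p => to_family_tagged_with (fprod_of_dffun I))).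
  by apply: eq_bigr => I _; apply: eq_bigr => j _; rewrite /G /= ffunE.
apply: onW_bij; exists (fun f => dffun_of_fprod (of_family_tagged_with f)) => I.
  by rewrite to_family_tagged_withK fprod_of_dffunK.
by rewrite dffun_of_fprodK of_family_tagged_withK.
Qed.

Section TensorMap.
Variables (R : realType) (k : nat) (p : 'I_k -> nat).
Implicit Types (A B : forall j : 'I_k, 'M[R]_(p j)) (T : tensor R p).

Lemma tensor_map_rank_one_sum A r (v : 'I_r -> forall j : 'I_k, 'I_(p j) -> R) :
  tensor_map A (fun I => \sum_(i < r) \prod_(j < k) v i j (I j)) =
  (fun J => \sum_(i < r) \prod_(j < k) mxapp (A j) (v i j) (J j)).
Proof.
apply: funext => J; rewrite /tensor_map.
under eq_bigr do rewrite big_distrr.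
rewrite exchange_big; apply: eq_bigr => i _ /=.
rewrite /mxapp prod_sum_tidx; apply: eq_bigr => I _.
by rewrite -big_split.
Qed.

Lemma tensor_map_comp A B T :
  tensor_map B (tensor_map A T) = tensor_map (fun j => B j *m A j) T.
Proof.
apply: funext => J; rewrite /tensor_map.
under eq_bigr do rewrite big_distrr.
rewrite exchange_big; apply: eq_bigr => I _ /=.
under eq_bigr do rewrite mulrA.
rewrite -big_distrl /=; congr (_ * _).
under eq_bigr do rewrite -big_split /=.
rewrite -(prod_sum_tidx (fun j x => B j (J j) x * A j x (I j))).
by apply: eq_bigr => j _; rewrite mxE.
Qed.

Lemma tensor_map_id T : tensor_map (fun j => 1%:M) T = T.
Proof.
apply: funext => J; rewrite /tensor_map (bigD1 J) //= big1 ?mul1r; last first.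
  by move=> j _; rewrite mxE eqxx.
rewrite big1 ?addr0 // => I neq_IJ.
have [j neq_j] : exists j, J j != I j.
  apply/existsP; apply: contraNT neq_IJ => /existsPn eq_JI.
  by apply/eqP/ffunP => j; move: (eq_JI j); rewrite negbK => /eqP.
by rewrite (bigD1 j) //= mxE (negbTE neq_j) !mul0r.
Qed.

Lemma tensor_mapK A : (forall j, A j \in unitmx) ->
  cancel (tensor_map A) (tensor_map (fun j => invmx (A j))).
Proof.
move=> A_unit T; rewrite tensor_map_comp.
have -> : (fun j => invmx (A j) *m A j) = (fun j => 1%:M).
  by apply: functional_extensionality_dep => j; rewrite mulVmx.
exact: tensor_map_id.
Qed.

Lemma decomp_with_tensor_map A (C : forall j, ('I_(p j) -> R) -> Prop) T r :
  (forall j, A j \in unitmx) ->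
  (forall j, maps_onto_orthant (A j) (C j)) ->
  decomp_with C T r <-> decomp_with (fun j => @nonneg_vec R (p j)) (tensor_map A T) r.
Proof.
move=> A_unit A_onto; split.
  case=> v [Cv defT]; exists (fun i j => mxapp (A j) (v i j)); split.
    by move=> i j; apply/A_onto; exists (v i j).
  by move=> J; rewrite (funext defT) tensor_map_rank_one_sum.
case=> w [w_ge0 defAT].
have preim i j : exists f, C j f /\ w i j = mxapp (A j) f by apply/A_onto/w_ge0.
pose v i j := sval (cid (preim i j)).
have [Cv def_w] : (forall i j, C j (v i j)) /\
                  (forall i j, w i j = mxapp (A j) (v i j)).
  by split=> i j; case: (svalP (cid (preim i j))).
exists v; split=> // I.
rewrite -(tensor_mapK A_unit T) (funext defAT).
under [X in tensor_map _ X]funext do under eq_bigr do under eq_bigr do rewrite def_w.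
by rewrite -tensor_map_rank_one_sum tensor_mapK.
Qed.

End TensorMap.

Theorem theorem4 (R : realType) (k : nat) (p : 'I_k -> nat)
  (le : forall j : 'I_k, rel 'I_(p j))
  (A : forall j : 'I_k, 'M[R]_(p j)) (T : tensor R p) :
  (forall j, is_poset (le j)) ->
  (forall j, simplicial (order_cone (R := R) (le j))) ->
  (forall j, A j \in unitmx) ->
  (forall j, maps_onto_orthant (A j) (order_cone (le j))) ->
  N_fin le T ->
  NDrank le T = rank_plus (tensor_map A T).
Proof.
move=> _ _ A_unit A_onto _; rewrite /NDrank /rank_plus; congr min_option.
by apply: funext => r; apply: propext; apply: decomp_with_tensor_map.
Qed.
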